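(* Let $h>0$, $n\in\mathbb{N}$, and let $\lambda:\mathbb{T}\to\mathbb{R}$ be an $n$-cycle with values $\lambda_0,\dots,\lambda_{n-1}\in\mathbb{R}\setminus\{\tfrac1h\}$, i.e. $\lambda(t)=\lambda_k$ whenever $t/h\equiv k \pmod n$. Assume $0<|e_{-\lambda}(nh)|\neq 1$. Let $f:\mathbb{T}\to\mathbb{R}$ be arbitrary. Then the equation $$\Delta_h y(t)+\lambda(t)y(t)=f(t),\qquad t\in\mathbb{T},$$ has Hyers–Ulam stability on $\mathbb{T}$ with Hyers–Ulam stability constant $$K_0(-\lambda)=\frac{h\,|e_{-\lambda}(nh)|}{\bigl|1-|e_{-\lambda}(nh)|\bigr|}\max\{S_0(-\lambda),\dots,S_{n-1}(-\lambda)\}.$$ Moreover, if $|e_{-\lambda}(nh)|>1$, then $K_0(-\lambda)$ is the minimum Hyers–Ulam stability constant for this equation.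
   Context: Fix $h>0$ and let $\mathbb{T}=\{0,h,2h,3h,\dots\}$. For $x:\mathbb{T}\to\mathbb{R}$, $\Delta_h x(t)=\frac{x(t+h)-x(t)}{h}$ and $\Delta_h^2x=\Delta_h(\Delta_h x)$, $\Delta_h^3x=\Delta_h(\Delta_h^2 x)$. An $n$-cycle is a function $\mu:\mathbb{T}\to\mathbb{R}$ with $\mu(t)=\mu_k$ whenever $t/h\equiv k\pmod n$, $k\in\{0,\dots,n-1\}$, which has period $n$ and no smaller period. For such $\mu$ define the discrete exponential $e_\mu(t)=\prod_{k=0}^{t/h-1}(1+h\mu(kh))$ (empty product $=1$), so $e_\mu(nh)=\prod_{k=0}^{n-1}(1+h\mu_k)$. For $k\in\{0,\dots,n-1\}$ define $$S_k(\mu)=\sum_{j=1}^{n}\prod_{i=0}^{j-1}\frac{1}{|1+h\mu_{(k+i)\bmod n}|},$$ (e.g. $S_0(\mu)=\frac{1}{|1+h\mu_0|}+\frac{1}{|1+h\mu_0||1+h\mu_1|}+\dots+\frac{1}{|1+h\mu_0|\cdots|1+h\mu_{n-1}|}$), and, when $0<|e_\mu(nh)|\neq1$, $$K_0(\mu)=\frac{h|e_\mu(nh)|}{\bigl|1-|e_\mu(nh)|\bigr|}\max\{S_0(\mu),\dots,S_{n-1}(\mu)\}.$$ Here $-\lambda$ denotes the $n$-cycle with values $-\lambda_0,\dots,-\lambda_{n-1}$. Hyers–Ulam stability: an equation $\mathcal{L}[y](t)=f(t)$, $t\in\mathbb{T}$ (with $\mathcal{L}$ a linear difference operator) has Hyers–Ulam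 stability on $\mathbb{T}$ with Hyers–Ulam stability constant $K>0$ if for every $\varepsilon>0$ and every $\xi:\mathbb{T}\to\mathbb{R}$ with $|\mathcal{L}[\xi](t)-f(t)|\le\varepsilon$ for all $t\in\mathbb{T}$, there is a solution $y:\mathbb{T}\to\mathbb{R}$ of the equation with $|\xi(t)-y(t)|\le K\varepsilon$ for all $t\in\mathbb{T}$. The minimum Hyers–Ulam stability constant is the smallest such $K$. *)

From Stdlib Require Import Reals Lra Lia List.
Open Scope R_scope.

(* A function x : T -> R on T = {0,h,2h,...} is represented by
   x : nat -> R with x k = x(kh). *)

Definition delta_h (h : R) (x : nat -> R) (k : nat) : R :=
  (x (S k) - x k) / h.

Definition is_ncycle (n : nat) (mu : nat -> R) : Prop :=
  (0 < n)%nat /\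
  (forall k, mu (k + n)%nat = mu k) /\
  (forall m, (0 < m < n)%nat -> ~ (forall k, mu (k + m)%nat = mu k)).

Fixpoint prodR (m : nat) (F : nat -> R) : R :=
  match m with
  | O => 1
  | S m' => prodR m' F * F m'
  end.

Fixpoint sumR (m : nat) (F : nat -> R) : R :=
  match m with
  | O => 0
  | S m' => sumR m' F + F m'
  end.

Definition e_disc (h : R) (mu : nat -> R) (m : nat) : R :=
  prodR m (fun k => 1 + h * mu k).

Definition S_k (h : R) (n : nat) (mu : nat -> R) (k : nat) : R :=
  sumR n (fun j' => prodR (S j')
            (fun i => / Rabs (1 + h * mu (Nat.modulo (k + i) n)))).

Definition maxR (n : nat) (F : nat -> R) : R :=
  match n with
  | O => 0
  | S n' => fold_right Rmax (F O) (map F (seq 1 n'))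
  end.

Definition K0 (h : R) (n : nat) (mu : nat -> R) : R :=
  h * Rabs (e_disc h mu n) / Rabs (1 - Rabs (e_disc h mu n))
  * maxR n (S_k h n mu).

Definition Lop (h : R) (lam : nat -> R) (y : nat -> R) (k : nat) : R :=
  delta_h h y k + lam k * y k.

Definition HUS (h : R) (lam f : nat -> R) (K : R) : Prop :=
  0 < K /\
  forall eps : R, 0 < eps ->
  forall xi : nat -> R,
    (forall k, Rabs (Lop h lam xi k - f k) <= eps) ->
    exists y : nat -> R,
      (forall k, Lop h lam y k = f k) /\
      (forall k, Rabs (xi k - y k) <= K * eps).

Definition min_HUS (h : R) (lam f : nat -> R) (K : R) : Prop :=
  HUS h lam f K /\ (forall K', HUS h lam f K' -> K <= K').

From Stdlib Require Import Reals Lra Lia List.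
From Coquelicot Require Import Coquelicot.
Open Scope R_scope.

(* Writing a_k = 1 - h*lam_k, a function y solves Delta_h y + lam y = f iff
   y(k+1) = a_k y(k) + h f(k).  Hence if xi has defect g = L[xi] - f, then
   y = xi - u is a solution iff u(k+1) = a_k u(k) + h g(k), and Hyers-Ulam
   stability amounts to bounding solutions u of this recurrence by |g|.
   For an n-periodic nonvanishing a, put q = 1/|a_0 ... a_{n-1}| and
   s_k(N) = sum_{m<N} prod_{i<=m} 1/|a_{k+i}|, so that S_k(-lam) = s_k(n).
   For q > 1 the solution of the recurrence starting at 0 satisfies
   |u(k)| <= h eps s_k(n)/(q-1); for q < 1 the backward series solution
   satisfies |u(k)| <= h eps s_k(n)/(1-q).  Conversely, for q < 1, a defect
   of modulus 1 whose signs are aligned with the products forces every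
   solution to have sup |u| >= h s_k(n)/(1-q), which gives minimality.
   The theorem follows since K_0(-lam) = h max_k s_k(n) / |1 - q|. *)

Lemma prodR_ext m F G : (forall i, (i < m)%nat -> F i = G i) -> prodR m F = prodR m G.
Proof.
  induction m as [|m IH]; intros HFG; simpl; auto.
  rewrite IH by (intros; apply HFG; lia). rewrite HFG by lia. reflexivity.
Qed.

Lemma sumR_ext m F G : (forall i, (i < m)%nat -> F i = G i) -> sumR m F = sumR m G.
Proof.
  induction m as [|m IH]; intros HFG; simpl; auto.
  rewrite IH by (intros; apply HFG; lia). rewrite HFG by lia. reflexivity.
Qed.

Lemma prodR_shift m F : prodR (S m) F = F 0%nat * prodR m (fun i => F (S i)).
Proof. induction m as [|m IH]; simpl in *; [ring|]. rewrite IH. ring. Qed.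

Lemma sumR_shift m F : sumR (S m) F = F 0%nat + sumR m (fun i => F (S i)).
Proof. induction m as [|m IH]; simpl in *; [ring|]. rewrite IH. ring. Qed.

Lemma prodR_add a b F : prodR (a + b) F = prodR a F * prodR b (fun i => F (a + i)%nat).
Proof.
  induction b as [|b IH]; simpl; [rewrite Nat.add_0_r; ring|].
  rewrite Nat.add_succ_r. simpl. rewrite IH. ring.
Qed.

Lemma sumR_add a b F : sumR (a + b) F = sumR a F + sumR b (fun i => F (a + i)%nat).
Proof.
  induction b as [|b IH]; simpl; [rewrite Nat.add_0_r; ring|].
  rewrite Nat.add_succ_r. simpl. rewrite IH. ring.
Qed.

Lemma prodR_abs m F : Rabs (prodR m F) = prodR m (fun i => Rabs (F i)).
Proof. induction m as [|m IH]; simpl; [apply Rabs_R1|]. rewrite Rabs_mult, IH. reflexivity. Qed.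

Lemma prodR_inv m F : prodR m (fun i => / F i) = / prodR m F.
Proof. induction m as [|m IH]; simpl; [now rewrite Rinv_1|]. rewrite IH, Rinv_mult. reflexivity. Qed.

Lemma prodR_pos m F : (forall i, 0 < F i) -> 0 < prodR m F.
Proof. induction m as [|m IH]; simpl; intros HF; [lra|]. apply Rmult_lt_0_compat; auto. Qed.

Lemma prodR_neq0 m F : (forall i, F i <> 0) -> prodR m F <> 0.
Proof. induction m as [|m IH]; simpl; intros HF; [lra|]. apply Rmult_integral_contrapositive; auto. Qed.

Lemma sumR_nonneg m F : (forall i, 0 <= F i) -> 0 <= sumR m F.
Proof. induction m as [|m IH]; simpl; intros HF; [lra|]. specialize (IH HF). specialize (HF m). lra. Qed.

Lemma sumR_pos m F : (0 < m)%nat -> (forall i, 0 < F i) -> 0 < sumR m F.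
Proof.
  destruct m as [|m]; [lia|]; intros _ HF; simpl.
  assert (0 <= sumR m F) by (apply sumR_nonneg; intros; left; auto).
  specialize (HF m). lra.
Qed.

Lemma sumR_scal c m F : sumR m (fun i => c * F i) = c * sumR m F.
Proof. induction m as [|m IH]; simpl; [ring|]. rewrite IH. ring. Qed.

Lemma sum_n_sumR (F : nat -> R) N : sum_n F N = sumR (S N) F.
Proof.
  rewrite sum_n_Reals. induction N as [|N IH]; simpl in *; [ring|].
  rewrite IH. reflexivity.
Qed.

Lemma fold_Rmax_ge x l : x <= fold_right Rmax x l /\ forall y, In y l -> y <= fold_right Rmax x l.
Proof.
  induction l as [|z l [IHx IHl]]; simpl; [split; [lra|tauto]|]. split.
  - eapply Rle_trans; [apply IHx|apply Rmax_r].
  - intros y [<-|Hy]; [apply Rmax_l|]. eapply Rle_trans; [apply IHl; auto|apply Rmax_r].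
Qed.

Lemma fold_Rmax_in x l : fold_right Rmax x l = x \/ In (fold_right Rmax x l) l.
Proof.
  induction l as [|z l IH]; simpl; auto.
  set (m := fold_right Rmax x l) in *. unfold Rmax.
  destruct (Rle_dec z m); [destruct IH as [E|E]; auto|]; right; auto.
Qed.

Lemma maxR_ge n F i : (i < n)%nat -> F i <= maxR n F.
Proof.
  destruct n as [|n]; [lia|]; intros Hi; simpl.
  destruct (fold_Rmax_ge (F 0%nat) (map F (seq 1 n))) as [H0 Hl].
  destruct i as [|i]; auto. apply Hl, in_map, in_seq. lia.
Qed.

Lemma maxR_attained n F : (0 < n)%nat -> exists i, (i < n)%nat /\ maxR n F = F i.
Proof.
  destruct n as [|n]; [lia|]; intros _; simpl.
  destruct (fold_Rmax_in (F 0%nat) (map F (seq 1 n))) as [E|E]; [exists 0%nat; split; auto; lia|].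
  apply in_map_iff in E as [i [Ei Hi]]. apply in_seq in Hi. exists i; split; auto; lia.
Qed.

Fixpoint forward_sol (a b : nat -> R) (k : nat) : R :=
  match k with O => 0 | S k' => a k' * forward_sol a b k' + b k' end.

Definition solves_rec (a : nat -> R) (h : R) (g u : nat -> R) : Prop :=
  forall k, u (S k) = a k * u k + h * g k.

Definition sgn (x : R) : R := if Rle_dec 0 x then 1 else -1.

Lemma sgn_mul x : sgn x * x = Rabs x.
Proof.
  unfold sgn. destruct (Rle_dec 0 x).
  - rewrite Rabs_pos_eq by lra. ring.
  - rewrite Rabs_left by lra. ring.
Qed.

Lemma sgn_abs x : Rabs (sgn x) = 1.
Proof. unfold sgn. destruct (Rle_dec 0 x); [apply Rabs_R1|rewrite Rabs_left; lra]. Qed.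

Section PeriodicRecurrence.

Variable a : nat -> R.
Variable n : nat.
Hypothesis n_pos : (0 < n)%nat.
Hypothesis a_per : forall k, a (k + n)%nat = a k.
Hypothesis a_nz : forall k, a k <> 0.
Variable h : R.
Hypothesis h_nonneg : 0 <= h.

Definition rprod (k N : nat) : R := prodR N (fun i => / Rabs (a (k + i))).
Definition iprod (k N : nat) : R := prodR N (fun i => / a (k + i)).

(* s_k(N) = sum_{m<N} rprod k (m+1); in particular S_k(-lam) = s_k(n) *)
Definition rsum (k N : nat) : R := sumR N (fun m => rprod k (S m)).

(* q = 1/|a_0 ... a_{n-1}|, the factor gained by rprod over one period *)
Definition cycle_ratio : R := / Rabs (prodR n a).

Lemma rprod_pos k N : 0 < rprod k N.
Proof. apply prodR_pos. intros i. apply Rinv_0_lt_compat, Rabs_pos_lt, a_nz. Qed.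

Lemma iprod_abs k N : Rabs (iprod k N) = rprod k N.
Proof. unfold iprod, rprod. rewrite prodR_abs. apply prodR_ext. intros. apply Rabs_inv. Qed.

Lemma rprod_add k M N : rprod k (M + N) = rprod k M * rprod (k + M) N.
Proof.
  unfold rprod. rewrite prodR_add. f_equal.
  apply prodR_ext. intros. rewrite Nat.add_assoc. reflexivity.
Qed.

Lemma rprod_succ k N : rprod k (S N) = / Rabs (a k) * rprod (S k) N.
Proof.
  unfold rprod. rewrite prodR_shift, Nat.add_0_r. f_equal.
  apply prodR_ext. intros. rewrite Nat.add_succ_r. reflexivity.
Qed.

Lemma iprod_succ k N : iprod k (S N) = / a k * iprod (S k) N.
Proof.
  unfold iprod. rewrite prodR_shift, Nat.add_0_r. f_equal.
  apply prodR_ext. intros. rewrite Nat.add_succ_r. reflexivity.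
Qed.

Lemma rprod_translate k N : rprod (k + n) N = rprod k N.
Proof.
  unfold rprod. apply prodR_ext. intros i _.
  replace (k + n + i)%nat with (k + i + n)%nat by lia. rewrite a_per. reflexivity.
Qed.

Lemma prodR_window k : prodR n (fun i => a (k + i)%nat) = prodR n a.
Proof.
  apply (Rmult_eq_reg_l (prodR k a)); [|apply prodR_neq0, a_nz].
  rewrite <- prodR_add, Nat.add_comm, prodR_add, Rmult_comm. f_equal.
  apply prodR_ext. intros i _. rewrite Nat.add_comm. apply a_per.
Qed.

Lemma rprod_period k : rprod k n = cycle_ratio.
Proof. unfold rprod, cycle_ratio. rewrite prodR_inv, <- prodR_abs, prodR_window. reflexivity. Qed.

Lemma cycle_ratio_pos : 0 < cycle_ratio.
Proof. rewrite <- (rprod_period 0). apply rprod_pos. Qed.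

Lemma rprod_after_period k N : rprod k (n + N) = cycle_ratio * rprod k N.
Proof. rewrite rprod_add, rprod_period, rprod_translate. reflexivity. Qed.

Lemma rsum_nonneg k N : 0 <= rsum k N.
Proof. apply sumR_nonneg. intros. left. apply rprod_pos. Qed.

Lemma rsum_pos k : 0 < rsum k n.
Proof. apply sumR_pos; [exact n_pos|]. intros. apply rprod_pos. Qed.

(* Shift identity |a_k| s_k(n) = 1 - q + s_{k+1}(n), driving the forward estimate. *)
Lemma rsum_shift k : Rabs (a k) * rsum k n = 1 - cycle_ratio + rsum (S k) n.
Proof.
  assert (Hak : 0 < Rabs (a k)) by apply Rabs_pos_lt, a_nz.
  assert (last : rsum k (S n) = rsum k n + cycle_ratio * / Rabs (a k)).
  { unfold rsum at 1. simpl. fold (rsum k n). unfold rprod at 1. simpl.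
    fold (rprod k n). rewrite rprod_period, a_per. reflexivity. }
  assert (first : rsum k (S n) = / Rabs (a k) * (1 + rsum (S k) n)).
  { unfold rsum. rewrite sumR_shift, Rmult_plus_distr_l, <- sumR_scal.
    f_equal; [rewrite rprod_succ; unfold rprod; simpl; ring|].
    apply sumR_ext. intros. apply rprod_succ. }
  rewrite first in last.
  apply (Rmult_eq_reg_l (/ Rabs (a k))); [|apply Rinv_neq_0_compat; lra].
  rewrite <- Rmult_assoc, Rinv_l, Rmult_1_l by lra. lra.
Qed.

Lemma rsum_after_period k N : rsum k (n + N) = rsum k n + cycle_ratio * rsum k N.
Proof.
  unfold rsum at 1. rewrite sumR_add. f_equal. unfold rsum. rewrite <- sumR_scal.
  apply sumR_ext. intros. rewrite <- Nat.add_succ_r. apply rprod_after_period.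
Qed.

Lemma rsum_bound k N : cycle_ratio < 1 -> rsum k N * (1 - cycle_ratio) <= rsum k n.
Proof.
  intros Hq. pose proof cycle_ratio_pos as Hq0.
  induction N as [N IH] using (well_founded_induction Wf_nat.lt_wf).
  destruct (Compare_dec.le_lt_dec N n) as [HN|HN].
  - assert (rsum k N <= rsum k n).
    { replace n with (N + (n - N))%nat by lia. unfold rsum. rewrite sumR_add.
      assert (0 <= sumR (n - N) (fun i => rprod k (S (N + i)))).
      { apply sumR_nonneg. intros. left. apply rprod_pos. }
      lra. }
    pose proof (rsum_nonneg k N). nra.
  - replace N with (n + (N - n))%nat by lia. rewrite rsum_after_period.
    pose proof (IH (N - n)%nat ltac:(lia)). pose proof (rsum_nonneg k n). nra.
Qed.

(* For q < 1 the products 1/|a_k ... a_{k+m}| are summable ... *)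
Lemma rprod_summable k : cycle_ratio < 1 -> ex_series (fun m => rprod k (S m)).
Proof.
  intros Hq.
  assert (Hlim : ex_finite_lim_seq (sum_n (fun m => rprod k (S m)))).
  { apply (ex_finite_lim_seq_incr _ (rsum k n / (1 - cycle_ratio))).
    - intros N. rewrite !sum_n_sumR. simpl. pose proof (rprod_pos k (S (S N))). lra.
    - intros N. rewrite sum_n_sumR. apply Rle_div_r; [lra|]. exact (rsum_bound k (S N) Hq). }
  destruct Hlim as [l Hl]. exists l. exact Hl.
Qed.

(* ... with sum s_k(n)/(1-q), by the periodicity T = s_k(n) + q T of the sum T. *)
Lemma rprod_series k :
  cycle_ratio < 1 -> Series (fun m => rprod k (S m)) = rsum k n / (1 - cycle_ratio).
Proof.
  intros Hq.
  set (T := Series (fun m => rprod k (S m))).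
  assert (E : T = rsum k n + cycle_ratio * T).
  { unfold T at 1. rewrite (Series_incr_n _ n) by (auto; apply rprod_summable, Hq).
    rewrite (Series_ext _ (fun m => cycle_ratio * rprod k (S m))).
    2: { intros m. rewrite <- Nat.add_succ_r. apply rprod_after_period. }
    rewrite Series_scal_l, <- sum_n_Reals, sum_n_sumR, Nat.succ_pred_pos by exact n_pos.
    reflexivity. }
  apply Rmult_eq_reg_r with (1 - cycle_ratio); [|lra].
  unfold Rdiv. rewrite Rmult_assoc, Rinv_l, Rmult_1_r by lra. nra.
Qed.

Lemma forward_bound g eps : 1 < cycle_ratio -> (forall k, Rabs (g k) <= eps) ->
  forall k, Rabs (forward_sol a (fun j => h * g j) k) <= h * eps * rsum k n / (cycle_ratio - 1).
Proof.
  intros Hq Hg. assert (eps0 : 0 <= eps) by (eapply Rle_trans; [apply Rabs_pos|apply (Hg 0%nat)]).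
  set (C := h * eps / (cycle_ratio - 1)).
  assert (C0 : 0 <= C) by (unfold C; apply Rle_mult_inv_pos; [apply Rmult_le_pos|]; lra).
  assert (HC : C * (1 - cycle_ratio) + h * eps = 0) by (unfold C; field; lra).
  intros k. replace (h * eps * rsum k n / (cycle_ratio - 1)) with (C * rsum k n) by (unfold C; field; lra).
  induction k as [|k IH]; simpl.
  - rewrite Rabs_R0. apply Rmult_le_pos; [exact C0|apply rsum_nonneg].
  - eapply Rle_trans; [apply Rabs_triang|]. rewrite !Rabs_mult, (Rabs_pos_eq h h_nonneg).
    assert (step : Rabs (a k) * Rabs (forward_sol a (fun j => h * g j) k) <= Rabs (a k) * (C * rsum k n))
      by (apply Rmult_le_compat_l; [apply Rabs_pos|exact IH]).
    assert (Hgk : h * Rabs (g k) <= h * eps) by (apply Rmult_le_compat_l; auto).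
    assert (shift := rsum_shift k).
    replace (Rabs (a k) * (C * rsum k n)) with (C * (Rabs (a k) * rsum k n)) in step by ring.
    rewrite shift in step. nra.
Qed.

Definition back_term (g : nat -> R) (k m : nat) : R := g (k + m)%nat * iprod k (S m).

Definition backward_sol (g : nat -> R) (k : nat) : R := - h * Series (back_term g k).

Lemma back_term_abs_le g eps k m : (forall j, Rabs (g j) <= eps) ->
  Rabs (back_term g k m) <= eps * rprod k (S m).
Proof.
  intros Hg. unfold back_term. rewrite Rabs_mult, iprod_abs.
  apply Rmult_le_compat_r; [left; apply rprod_pos|apply Hg].
Qed.

Lemma back_term_summable g eps k : cycle_ratio < 1 -> (forall j, Rabs (g j) <= eps) ->
  ex_series (fun m => Rabs (back_term g k m)).
Proof.
  intros Hq Hg. apply (@ex_series_le R_AbsRing R_CompleteNormedModule _ (fun m => eps * rprod k (S m))).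
  - intros m. change (Rabs (Rabs (back_term g k m)) <= eps * rprod k (S m)).
    rewrite Rabs_Rabsolu. apply back_term_abs_le, Hg.
  - exact (@ex_series_scal_l R_AbsRing R_NormedModule eps _ (rprod_summable k Hq)).
Qed.

(* |u(k)| <= h eps sum_m 1/|a_k ... a_{k+m}| = h eps s_k(n)/(1-q). *)
Lemma backward_bound g eps k : cycle_ratio < 1 -> (forall j, Rabs (g j) <= eps) ->
  Rabs (backward_sol g k) <= h * eps * rsum k n / (1 - cycle_ratio).
Proof.
  intros Hq Hg. pose proof (back_term_summable g eps k Hq Hg) as Habs.
  unfold backward_sol. rewrite Rabs_mult, Rabs_Ropp, (Rabs_pos_eq h h_nonneg).
  replace (h * eps * rsum k n / (1 - cycle_ratio))
    with (h * (eps * Series (fun m => rprod k (S m)))) by (rewrite rprod_series by exact Hq; field; lra).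
  apply Rmult_le_compat_l; [exact h_nonneg|].
  eapply Rle_trans; [apply Series_Rabs, Habs|]. rewrite <- Series_scal_l.
  apply Series_le; [|exact (@ex_series_scal_l R_AbsRing R_NormedModule eps _ (rprod_summable k Hq))].
  intros m. split; [apply Rabs_pos|apply back_term_abs_le, Hg].
Qed.

(* The backward series satisfies the recurrence, by splitting off its first term. *)
Lemma backward_solves g eps : cycle_ratio < 1 -> (forall j, Rabs (g j) <= eps) ->
  solves_rec a h g (backward_sol g).
Proof.
  intros Hq Hg k. assert (Hak := a_nz k).
  assert (E : Series (back_term g k) = / a k * (g k + Series (back_term g (S k)))).
  { rewrite Series_incr_1 by apply ex_series_Rabs, (back_term_summable g eps k Hq Hg).
    rewrite (Series_ext _ (fun m => / a k * back_term g (S k) m)).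
    2: { intros m. unfold back_term. rewrite iprod_succ, Nat.add_succ_r. simpl. ring. }
    rewrite Series_scal_l. unfold back_term, iprod. simpl. rewrite !Nat.add_0_r. ring. }
  unfold backward_sol. rewrite E. field. exact Hak.
Qed.

Lemma bounded_solution g eps : cycle_ratio <> 1 -> (forall j, Rabs (g j) <= eps) ->
  exists u, solves_rec a h g u /\
    forall k, Rabs (u k) <= h * eps * rsum k n / Rabs (1 - cycle_ratio).
Proof.
  intros Hq Hg. destruct (Rlt_or_le cycle_ratio 1) as [Hlt|Hge].
  - exists (backward_sol g). split; [apply (backward_solves g eps Hlt Hg)|].
    intros k. rewrite (Rabs_pos_eq (1 - cycle_ratio)) by lra. apply backward_bound; auto.
  - exists (forward_sol a (fun j => h * g j)). split; [intros k; reflexivity|].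
    intros k. rewrite (Rabs_minus_sym 1), (Rabs_pos_eq (cycle_ratio - 1)) by lra. apply forward_bound; auto; lra.
Qed.

(* The extremal defect for the start k0: zero before k0, and afterwards of
   modulus 1 with sign opposite to that of 1/(a_{k0} ... a_j). *)
Definition aligned_defect (k0 j : nat) : R :=
  if Nat.ltb j k0 then 0 else - sgn (iprod k0 (S (j - k0))).

Lemma aligned_defect_bound k0 j : Rabs (aligned_defect k0 j) <= 1.
Proof.
  unfold aligned_defect. destruct (Nat.ltb j k0).
  - rewrite Rabs_R0. lra.
  - rewrite Rabs_Ropp, sgn_abs. lra.
Qed.

Lemma aligned_defect_term k0 m :
  aligned_defect k0 (k0 + m) * iprod k0 (S m) = - rprod k0 (S m).
Proof.
  unfold aligned_defect. replace (Nat.ltb (k0 + m) k0) with false by (symmetry; apply Nat.ltb_ge; lia).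
  replace (k0 + m - k0)%nat with m by lia. rewrite <- iprod_abs, <- sgn_mul. ring.
Qed.

Lemma aligned_telescoping k0 u : solves_rec a h (aligned_defect k0) u ->
  forall m, u (k0 + m)%nat * iprod k0 m = u k0 - h * rsum k0 m.
Proof.
  intros Hu m. induction m as [|m IH].
  - unfold iprod, rsum. simpl. rewrite Nat.add_0_r. ring.
  - rewrite Nat.add_succ_r, Hu.
    assert (Hprod : iprod k0 (S m) = iprod k0 m * / a (k0 + m)%nat) by reflexivity.
    assert (Hsum : rsum k0 (S m) = rsum k0 m + rprod k0 (S m)) by reflexivity.
    pose proof (aligned_defect_term k0 m) as Hterm.
    replace (u k0 - h * rsum k0 (S m)) with (u (k0 + m)%nat * iprod k0 m - h * rprod k0 (S m))
      by (rewrite Hsum, IH; ring).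
    replace (rprod k0 (S m)) with (- (aligned_defect k0 (k0 + m) * iprod k0 (S m))) by lra.
    rewrite Hprod. field. apply a_nz.
Qed.

Lemma minimal_constant K' k0 : cycle_ratio < 1 ->
  (forall g, (forall j, Rabs (g j) <= 1) ->
     exists u, solves_rec a h g u /\ forall j, Rabs (u j) <= K') ->
  h * rsum k0 n / (1 - cycle_ratio) <= K'.
Proof.
  intros Hq HK. destruct (HK (aligned_defect k0) (aligned_defect_bound k0)) as [u [Hu Hb]].
  assert (Hm : forall m, h * rsum k0 (S m) <= K' + K' * rprod k0 (S m)).
  { intros m. pose proof (aligned_telescoping k0 u Hu (S m)) as E.
    assert (B : Rabs (u (k0 + S m)%nat * iprod k0 (S m)) <= K' * rprod k0 (S m)).
    { rewrite Rabs_mult, iprod_abs. apply Rmult_le_compat_r; [left; apply rprod_pos|apply Hb]. }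
    pose proof (Rle_abs (u k0)). pose proof (Hb k0).
    pose proof (Rle_abs (- (u (k0 + S m)%nat * iprod k0 (S m)))). rewrite Rabs_Ropp in *. lra. }
  set (F := fun m => rprod k0 (S m)).
  replace (h * rsum k0 n / (1 - cycle_ratio)) with (h * Series F)
    by (unfold F; rewrite rprod_series by exact Hq; unfold Rdiv; ring).
  assert (Hsum : is_lim_seq (fun m => h * rsum k0 (S m)) (h * Series F)).
  { apply (is_lim_seq_ext (fun m => h * sum_n F m)); [intros m; rewrite sum_n_sumR; reflexivity|].
    apply (is_lim_seq_scal_l _ h (Series F)), Series_correct, rprod_summable, Hq. }
  assert (Htail : is_lim_seq (fun m => K' + K' * F m) (K' + K' * 0)).
  { apply is_lim_seq_plus'; [apply is_lim_seq_const|].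
    apply (is_lim_seq_scal_l _ K' 0), ex_series_lim_0, rprod_summable, Hq. }
  pose proof (is_lim_seq_le _ _ _ _ Hm Hsum Htail) as Hle. simpl in Hle. lra.
Qed.

End PeriodicRecurrence.

Definition coef (h : R) (lam : nat -> R) (k : nat) : R := 1 + h * - lam k.

Lemma Lop_difference h lam f xi y k : h <> 0 ->
  (Lop h lam y k = f k <->
   xi (S k) - y (S k) = coef h lam k * (xi k - y k) + h * (Lop h lam xi k - f k)).
Proof.
  intros Hh.
  assert (E : coef h lam k * (xi k - y k) + h * (Lop h lam xi k - f k) - (xi (S k) - y (S k))
              = h * (Lop h lam y k - f k)) by (unfold coef, Lop, delta_h; field; exact Hh).
  split; intros H.
  - rewrite H, Rminus_eq_0, Rmult_0_r in E. lra.
  - assert (Hprod : h * (Lop h lam y k - f k) = 0) by lra.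
    apply Rmult_integral in Hprod as [|]; lra.
Qed.

Lemma Lop_forward h lam F k : h <> 0 ->
  Lop h lam (forward_sol (coef h lam) (fun j => h * F j)) k = F k.
Proof. intros Hh. unfold Lop, delta_h, coef. simpl. field. exact Hh. Qed.

Lemma HUS_of_recurrence h lam f K : 0 < h -> 0 < K ->
  (forall eps g, 0 < eps -> (forall k, Rabs (g k) <= eps) ->
     exists u, solves_rec (coef h lam) h g u /\ forall k, Rabs (u k) <= K * eps) ->
  HUS h lam f K.
Proof.
  intros Hh HK Hrec. split; [exact HK|]. intros eps Heps xi Hxi.
  destruct (Hrec eps (fun k => Lop h lam xi k - f k) Heps Hxi) as [u [Hu Hb]].
  exists (fun k => xi k - u k). split.
  - intros k. apply (Lop_difference h lam f xi); [lra|].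
    replace (xi (S k) - (xi (S k) - u (S k))) with (u (S k)) by ring.
    replace (xi k - (xi k - u k)) with (u k) by ring. apply Hu.
  - intros k. replace (xi k - (xi k - u k)) with (u k) by ring. apply Hb.
Qed.

Lemma recurrence_of_HUS h lam f K : 0 < h -> HUS h lam f K ->
  forall g, (forall j, Rabs (g j) <= 1) ->
  exists u, solves_rec (coef h lam) h g u /\ forall j, Rabs (u j) <= K.
Proof.
  intros Hh [_ HK] g Hg.
  set (xi := forward_sol (coef h lam) (fun j => h * (f j + g j))).
  assert (Hdef : forall j, Lop h lam xi j - f j = g j)
    by (intros j; unfold xi; rewrite Lop_forward by lra; ring).
  destruct (HK 1 Rlt_0_1 xi) as [y [Hy Hb]]; [intros j; rewrite Hdef; apply Hg|].
  exists (fun j => xi j - y j). split.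
  - intros j. rewrite <- (Hdef j). apply Lop_difference; [lra|apply Hy].
  - intros j. rewrite <- (Rmult_1_r K). apply Hb.
Qed.

Lemma periodic_mod (F : nat -> R) n : (0 < n)%nat -> (forall k, F (k + n)%nat = F k) ->
  forall x, F (x mod n) = F x.
Proof.
  intros Hn Hper x. rewrite (Nat.div_mod_eq x n) at 2.
  generalize (x / n)%nat. intros m. induction m as [|m IH].
  - now rewrite Nat.mul_0_r.
  - replace (n * S m + x mod n)%nat with (n * m + x mod n + n)%nat by lia. rewrite Hper. exact IH.
Qed.

Lemma S_k_rsum h n lam k : (0 < n)%nat -> (forall k, lam (k + n)%nat = lam k) ->
  S_k h n (fun t => - lam t) k = rsum (coef h lam) k n.
Proof.
  intros Hn Hper. unfold S_k, rsum, rprod, coef.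
  apply sumR_ext. intros j _. apply prodR_ext. intros i _.
  rewrite (periodic_mod lam n Hn Hper). reflexivity.
Qed.

(* Each s_k(n) is one of S_0(-lam), ..., S_{n-1}(-lam), hence below their maximum. *)
Lemma rsum_le_max h n lam k : (0 < n)%nat -> (forall k, lam (k + n)%nat = lam k) ->
  rsum (coef h lam) k n <= maxR n (S_k h n (fun t => - lam t)).
Proof.
  intros Hn Hper. rewrite <- S_k_rsum by auto.
  replace (S_k h n (fun t => - lam t) k) with (S_k h n (fun t => - lam t) (k mod n)).
  - apply maxR_ge, Nat.mod_upper_bound. lia.
  - unfold S_k. apply sumR_ext. intros j _. apply prodR_ext. intros i _.
    rewrite Nat.Div0.add_mod_idemp_l. reflexivity.
Qed.

Lemma K0_eq h n lam : Rabs (prodR n (coef h lam)) <> 0 -> Rabs (prodR n (coef h lam)) <> 1 ->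
  K0 h n (fun t => - lam t)
  = h * maxR n (S_k h n (fun t => - lam t)) / Rabs (1 - cycle_ratio (coef h lam) n).
Proof.
  intros HP0 HP1. unfold K0, e_disc, cycle_ratio. fold (coef h lam).
  set (P := Rabs (prodR n (coef h lam))) in *.
  assert (HP : 0 < P) by (pose proof (Rabs_pos (prodR n (coef h lam))); unfold P in *; lra).
  replace (1 - / P) with ((1 - P) * / - P) by (field; lra).
  rewrite Rabs_mult, Rabs_inv, Rabs_Ropp, (Rabs_pos_eq P) by lra.
  assert (Rabs (1 - P) <> 0) by (apply Rabs_no_R0; lra). field. split; lra.
Qed.

Lemma coef_nz h lam k : 0 < h -> lam k <> 1 / h -> coef h lam k <> 0.
Proof.
  intros Hh Hlam E. apply Hlam. unfold coef in E.
  apply (Rmult_eq_reg_l h); [|lra]. field_simplify; lra.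
Qed.

Section PeriodicEquation.

Variables (h : R) (n : nat) (lam f : nat -> R).
Hypothesis h_pos : 0 < h.
Hypothesis n_pos : (0 < n)%nat.
Hypothesis lam_per : forall k, lam (k + n)%nat = lam k.
Hypothesis lam_regular : forall k, lam k <> 1 / h.

Let coef_per : forall k, coef h lam (k + n)%nat = coef h lam k.
Proof. intros k. unfold coef. rewrite lam_per. reflexivity. Qed.

Let coef_nonzero : forall k, coef h lam k <> 0.
Proof. intros k. apply coef_nz; auto. Qed.

Lemma stability_constant : cycle_ratio (coef h lam) n <> 1 ->
  HUS h lam f (h * maxR n (S_k h n (fun t => - lam t)) / Rabs (1 - cycle_ratio (coef h lam) n)).
Proof.
  intros Hq1. set (q := cycle_ratio (coef h lam) n) in *.
  set (Mx := maxR n (S_k h n (fun t => - lam t))).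
  assert (Mx_ge : forall k, rsum (coef h lam) k n <= Mx) by (intros; apply rsum_le_max; auto).
  assert (Mx_pos : 0 < Mx)
    by (eapply Rlt_le_trans; [apply (rsum_pos _ n n_pos coef_nonzero 0)|apply Mx_ge]).
  assert (Habs : 0 < Rabs (1 - q)) by (apply Rabs_pos_lt; lra).
  apply HUS_of_recurrence; [exact h_pos|apply Rdiv_lt_0_compat; [nra|exact Habs]|].
  intros eps g Heps Hg.
  destruct (bounded_solution _ n n_pos coef_per coef_nonzero h (Rlt_le _ _ h_pos) g eps Hq1 Hg)
    as [u [Hu Hb]].
  exists u. split; [exact Hu|]. intros k. fold q in Hb. eapply Rle_trans; [apply Hb|].
  replace (h * Mx / Rabs (1 - q) * eps) with (h * eps * Mx / Rabs (1 - q)) by (field; lra).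
  apply Rmult_le_compat_r; [left; apply Rinv_0_lt_compat, Habs|].
  apply Rmult_le_compat_l; [nra|apply Mx_ge].
Qed.

Lemma minimality_constant K' : cycle_ratio (coef h lam) n < 1 -> HUS h lam f K' ->
  h * maxR n (S_k h n (fun t => - lam t)) / (1 - cycle_ratio (coef h lam) n) <= K'.
Proof.
  intros Hq HK'.
  destruct (maxR_attained n (S_k h n (fun t => - lam t)) n_pos) as [k0 [_ Hk0]].
  rewrite Hk0, S_k_rsum by auto.
  apply (minimal_constant _ n n_pos coef_per coef_nonzero h K' k0 Hq).
  exact (recurrence_of_HUS h lam f K' h_pos HK').
Qed.

End PeriodicEquation.

Theorem theorem2p5 (h : R) (n : nat) (lam f : nat -> R) :
  0 < h ->
  is_ncycle n lam ->
  (forall k, lam k <> 1 / h) ->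
  0 < Rabs (e_disc h (fun t => - lam t) n) ->
  Rabs (e_disc h (fun t => - lam t) n) <> 1 ->
  HUS h lam f (K0 h n (fun t => - lam t)) /\
  (Rabs (e_disc h (fun t => - lam t) n) > 1 ->
   min_HUS h lam f (K0 h n (fun t => - lam t))).
Proof.
  intros Hh [Hn [Hper _]] Hlam HP0 HP1.
  change (e_disc h (fun t => - lam t) n) with (prodR n (coef h lam)) in *.
  rewrite K0_eq by lra.
  (* q = 1/|e_{-lam}(nh)|, so q <> 1, and q < 1 exactly when |e_{-lam}(nh)| > 1 *)
  assert (Hq : cycle_ratio (coef h lam) n = / Rabs (prodR n (coef h lam))) by reflexivity.
  assert (Hq1 : cycle_ratio (coef h lam) n <> 1).
  { rewrite Hq. intros E. apply HP1. rewrite <- (Rinv_inv (Rabs _)), E. apply Rinv_1. }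
  pose proof (stability_constant h n lam f Hh Hn Hper Hlam Hq1) as stable.
  split; [exact stable|]. intros HP. split; [exact stable|]. intros K' HK'.
  assert (Hqlt : cycle_ratio (coef h lam) n < 1)
    by (rewrite Hq, <- Rinv_1; apply Rinv_lt_contravar; lra).
  rewrite (Rabs_pos_eq (1 - _)) by lra.
  exact (minimality_constant h n lam f Hh Hn Hper Hlam K' Hqlt HK').
Qed.
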